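(* Let $X$ be a Hausdorff topological space. For each arc $\Phi:[0,1]\to X$ (a continuous injective map), let $P_\Phi$ be the image $\Phi([0,1])$ linearly ordered by $\Phi(s)\le\Phi(t)$ iff $s\le t$. Let $A(X)$ be the set of all $P_\Phi$ for all arcs $\Phi$ in $X$, together with the trivial path $\{x\}$ for each $x\in X$. Then $A(X)$ is a path space.
   Context: A subset $Y$ of a linearly ordered set $X$ is called complete (in $X$) if every nonempty $Z \subseteq Y$ has a supremum and an infimum in $X$ and both lie in $Y$. A path is a linearly ordered set $(P,\le_P)$ that is complete in itself. Distinct paths may share elements; intersections and unions of paths refer to their underlying sets. A path is trivial if it has exactly one element. A set of paths is compatible if for any two paths $P,Q$ in it, $P\cap Q$ is complete in $P$ (with the order of $P$). For $x \le y$ in a path $P$, the segment of $P$ from $x$ to $y$ is the interval $[x,y]$ of $P$ with the induced order. A path $P$ connects to a path $Q$ if $P \cap Q=\{x\}$ where $x=\max P=\min Q$; in this case the concatenation of $P$ and $Q$ is $P\cup Q$ with the order extending both orders in which every element of $P$ precedes every element of $Q$. The inverse of a path is the same set with the reversed order. A dipath space is a compatible set of paths closed under segments and under concatenations (whenever $P,Q$ are members and $P$ connects to $Q$, their concatenation is a member). A path space is a dipath space that is also closed under inverses. *)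

From HB Require Import structures.
From mathcomp Require Import all_boot all_order all_algebra.
From mathcomp Require Import all_classical all_reals topology.
From mathcomp Require Import Rstruct Rstruct_topology.
From Stdlib Require Import Reals.
Set Implicit Arguments. Unset Strict Implicit. Unset Printing Implicit Defensive.

(* A "linearly ordered subset" of a carrier type X is encoded by its order
   relation R : X -> X -> Prop; its underlying set is {x | R x x}.  Hence a
   path is determined by (and identified with) its order relation. *)
Section Paths.
Variable X : Type.
Definition rel := X -> X -> Prop.

Definition carrier (R : rel) : X -> Prop := fun x => R x x.

Definition linear_order (R : rel) : Prop :=
  (forall x y, R x y -> R x x /\ R y y) /\
  (forall x y, R x y -> R y x -> x = y) /\
  (forall x y z, R x y -> R y z -> R x z) /\
  (forall x y, R x x -> R y y -> R x y \/ R y x).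

Definition is_sup (R : rel) (Z : X -> Prop) (s : X) : Prop :=
  R s s /\ (forall z, Z z -> R z s) /\
  (forall u, R u u -> (forall z, Z z -> R z u) -> R s u).

Definition is_inf (R : rel) (Z : X -> Prop) (s : X) : Prop :=
  R s s /\ (forall z, Z z -> R s z) /\
  (forall u, R u u -> (forall z, Z z -> R u z) -> R u s).

Definition complete_in (R : rel) (Y : X -> Prop) : Prop :=
  (forall y, Y y -> R y y) /\
  forall Z : X -> Prop, (forall z, Z z -> Y z) -> (exists z, Z z) ->
    (exists s, is_sup R Z s /\ Y s) /\ (exists i, is_inf R Z i /\ Y i).

Definition is_path (P : rel) : Prop := linear_order P /\ complete_in P (carrier P).

Definition compatible (S : rel -> Prop) : Prop :=
  forall P Q, S P -> S Q -> complete_in P (fun x => carrier P x /\ carrier Q x).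

Definition segment (P : rel) (x y : X) : rel :=
  fun a b => P x a /\ P a b /\ P b y.

Definition connects (P Q : rel) : Prop :=
  exists x, (forall z, (carrier P z /\ carrier Q z) <-> z = x) /\
    (carrier P x /\ forall z, carrier P z -> P z x) /\
    (carrier Q x /\ forall z, carrier Q z -> Q x z).

Definition concat (P Q : rel) : rel :=
  fun a b => P a b \/ Q a b \/ (carrier P a /\ carrier Q b).

Definition inverse (P : rel) : rel := fun a b => P b a.

Definition dipath_space (S : rel -> Prop) : Prop :=
  (forall P, S P -> is_path P) /\ compatible S /\
  (forall P x y, S P -> P x y -> S (segment P x y)) /\
  (forall P Q, S P -> S Q -> connects P Q -> S (concat P Q)).

Definition path_space (S : rel -> Prop) : Prop :=
  dipath_space S /\ forall P, S P -> S (inverse P).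
End Paths.

Local Open Scope classical_set_scope.

Definition arc (X : topologicalType) (Phi : R -> X) : Prop :=
  {within `[0%R, 1%R], continuous Phi} /\ {in `[0%R, 1%R] &, injective Phi}.

Definition arc_path (X : topologicalType) (Phi : R -> X) : rel X :=
  fun a b => exists s t : R, (0 <= s)%R /\ (s <= t)%R /\ (t <= 1)%R /\
                             a = Phi s /\ b = Phi t.

Definition trivial_path (X : Type) (x : X) : rel X := fun a b => a = x /\ b = x.

Definition arc_space (X : topologicalType) : rel X -> Prop :=
  fun P => (exists Phi, arc Phi /\ P = arc_path Phi) \/
           (exists x, P = trivial_path x).

From Pilot Require Import Defs.
From mathcomp Require Import all_classical all_reals topology.
From mathcomp Require Import all_boot all_order all_algebra.
From mathcomp Require Import normedtype Rstruct Rstruct_topology.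
From Stdlib Require Import Reals Lra.

(* An arc f : [0,1] -> X gives the path P_f = arc_path f, whose order is the
   order of [0,1] transported along the injective map f.  Order questions on
   P_f thus become questions about parameters in [0,1]: P_f is linear, and
   suprema exist by completeness of R (infima are suprema for the reversed
   arc u |-> f (1 - u)).  A subset Y of P_f is complete in P_f as soon as
   its parameter set is closed in [0,1]; this is the case when Y is the
   trace of a closed subset of X.  As X is Hausdorff, the carrier of every
   member of A(X) is closed (images of [0,1] are compact, points are
   closed), which yields compatibility.  Closure under inverses, segments
   and concatenation comes from reparametrisation: reversal u |-> 1 - u, an
   affine rescaling of a subinterval, and running through two arcs at
   double speed; trivial paths are handled directly. *)

Local Open Scope classical_set_scope.

Lemma nbhs_RP (x : R) (P : set R) :
  nbhs x P <-> exists d, Rlt 0 d /\ forall y, Rlt (Rabs (Rminus y x)) d -> P y.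
Proof.
rewrite nbhs_ballP; split.
  move=> [e /= /RltP e0 H]; exists e; split => // y hy; apply: H.
  rewrite /ball /=; apply/RltP; change (Rlt (Rabs (Rminus x y)) e).
  by rewrite Rabs_minus_sym.
move=> [d [d0 H]]; exists d; first by apply/RltP.
move=> y hy; apply: H; rewrite Rabs_minus_sym.
by move: hy; rewrite /ball /= => /RltP.
Qed.

Lemma in_unit_interval (x : R) :
  (`[0%R, 1%R] : set R) x <-> Rle 0 x /\ Rle x 1.
Proof.
rewrite /= in_itv /=; split.
  by move/andP=> [/RleP h1 /RleP h2].
by move=> [h1 h2]; apply/andP; split; apply/RleP.
Qed.

Definition cont01 {X : topologicalType} (f : R -> X) : Prop :=
  {within `[0%R, 1%R], continuous f}.

Lemma cont01P {X : topologicalType} (f : R -> X) : cont01 f <->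
  forall x, Rle 0 x -> Rle x 1 -> forall V, nbhs (f x) V ->
    exists d, Rlt 0 d /\
      forall y, Rle 0 y -> Rle y 1 -> Rlt (Rabs (Rminus y x)) d -> V (f y).
Proof.
rewrite /cont01 subspace_continuousP; split.
  move=> H x x0 x1 V /(H x (proj2 (in_unit_interval x) (conj x0 x1))).
  rewrite /= /within /= nbhs_simpl /= => /nbhs_RP [d [d0 Hd]].
  exists d; split => // y y0 y1 hy; apply: (Hd y hy); exact/in_unit_interval.
move=> H x /in_unit_interval [x0 x1] V /(H x x0 x1) [d [d0 Hd]].
rewrite /= /within /= nbhs_simpl /=; apply/nbhs_RP; exists d; split => //.
by move=> y hy /in_unit_interval [y0 y1]; apply: Hd.
Qed.

Local Open Scope R_scope.

Definition inj01 {X : Type} (f : R -> X) : Prop :=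
  forall s t, 0 <= s <= 1 -> 0 <= t <= 1 -> f s = f t -> s = t.

Lemma arcP {X : topologicalType} (f : R -> X) :
  Defs.arc f <-> cont01 f /\ inj01 f.
Proof.
rewrite /Defs.arc /inj01; split => -[c i]; split => //.
  by move=> s t hs ht; apply: i; rewrite in_setE; apply/in_unit_interval.
by move=> s t; rewrite !in_setE => /in_unit_interval hs /in_unit_interval ht; apply: i.
Qed.

Lemma rel_ext {X : Type} (P Q : Defs.rel X) :
  (forall a b, P a b <-> Q a b) -> P = Q.
Proof. by move=> H; apply: funext => a; apply: funext => b; apply: propext. Qed.

Section ArcPath.
Context {X : topologicalType}.
Implicit Types f : R -> X.

Lemma arc_path_intro f s t :
  0 <= s -> s <= t -> t <= 1 -> arc_path f (f s) (f t).
Proof. by move=> *; exists s, t. Qed.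

Lemma arc_path_carrier f a :
  carrier (arc_path f) a <-> exists s, 0 <= s <= 1 /\ a = f s.
Proof.
split; first by move=> [s [t [h0 [h1 [h2 [-> _]]]]]]; exists s; split => //; lra.
move=> [s [hs ->]]; apply: arc_path_intro; lra.
Qed.

Lemma arc_path_le {f s t} : inj01 f -> 0 <= s <= 1 -> 0 <= t <= 1 ->
  arc_path f (f s) (f t) -> s <= t.
Proof.
move=> inj hs ht [s' [t' [h0 [h1 [h2 [e1 e2]]]]]].
have -> : s = s' by apply: inj => //; lra.
by have -> : t = t' by apply: inj => //; lra.
Qed.

Lemma arc_path_linear {f} : inj01 f -> linear_order (arc_path f).
Proof.
move=> inj; split; [|split; [|split]].
- move=> x y [s [t [h0 [h1 [h2 [-> ->]]]]]]; split; apply: arc_path_intro; lra.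
- move=> x y [s [t [h0 [h1 [h2 [-> ->]]]]]] /(arc_path_le inj) ts.
  by have -> : s = t by apply: Rle_antisym => //; apply: ts; lra.
- move=> x y z [s [t [h0 [h1 [h2 [-> ->]]]]]] [t' [u [h0' [h1' [h2' [e ->]]]]]].
  have et : t = t' by apply: inj => //; lra.
  apply: arc_path_intro; lra.
- move=> x y /arc_path_carrier [s [hs ->]] /arc_path_carrier [t [ht ->]].
  by case: (Rle_or_lt s t) => h; [left|right]; apply: arc_path_intro; lra.
Qed.

Lemma arc_path_max f x : inj01 f -> carrier (arc_path f) x ->
  (forall z, carrier (arc_path f) z -> arc_path f z x) -> x = f 1.
Proof.
move=> inj /arc_path_carrier [t [ht ->]] /(_ (f 1)) top.
have ht1 : 1 <= t by apply: (arc_path_le inj) => //; [lra|apply: top; apply: arc_path_intro; lra].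
by congr f; lra.
Qed.

Lemma arc_path_min f x : inj01 f -> carrier (arc_path f) x ->
  (forall z, carrier (arc_path f) z -> arc_path f x z) -> x = f 0.
Proof.
move=> inj /arc_path_carrier [t [ht ->]] /(_ (f 0)) bot.
have ht0 : t <= 0 by apply: (arc_path_le inj) => //; [lra|apply: bot; apply: arc_path_intro; lra].
by congr f; lra.
Qed.

Lemma arc_path_inverse f : inverse (arc_path f) = arc_path (fun u => f (1 - u)).
Proof.
have e t : f t = f (1 - (1 - t)) by congr f; ring.
apply: rel_ext => a b; split => -[s [t [h0 [h1 [h2 [-> ->]]]]]].
  by rewrite (e s) (e t); exists (1 - t), (1 - s); do !split => //; lra.
by exists (1 - t), (1 - s); do !split => //; lra.
Qed.

Lemma inj01_reverse {f} : inj01 f -> inj01 (fun u => f (1 - u)).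
Proof. by move=> inj s t hs ht /inj H; have := H ltac:(lra) ltac:(lra); lra. Qed.

Lemma arc_path_sup {f} (inj : inj01 f) (Z : X -> Prop) :
  (forall z, Z z -> carrier (arc_path f) z) -> (exists z, Z z) ->
  exists sg, 0 <= sg <= 1 /\ is_sup (arc_path f) Z (f sg) /\
    forall d, 0 < d -> exists s, 0 <= s <= 1 /\ Z (f s) /\ Rabs (s - sg) < d.
Proof.
move=> HZ [z0 Zz0].
pose E s := 0 <= s <= 1 /\ Z (f s).
have bE : bound E by exists 1 => s [hs _]; lra.
have [s0 Es0] : exists s, E s.
  by case/arc_path_carrier: (HZ z0 Zz0) => s [hs e]; exists s; split => //; rewrite -e.
have [sg [ub lub]] := completeness E bE (ex_intro _ s0 Es0).
have sg0 : 0 <= sg by have := ub s0 Es0; case: Es0 => ? _; lra.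
have sg1 : sg <= 1 by apply: lub => s [hs _]; lra.
exists sg; split; first lra; split.
  split; first by apply: arc_path_intro; lra.
  split.
    move=> z Zz; case/arc_path_carrier: (HZ z Zz) => s [hs e]; rewrite e.
    have := ub s (conj hs (eq_ind z Z Zz _ e)) => ?; apply: arc_path_intro; lra.
  move=> u /arc_path_carrier [w [hw ->]] H.
  have : sg <= w by apply: lub => s [hs Zs]; apply: (arc_path_le inj hs hw); apply: H.
  by move=> ?; apply: arc_path_intro; lra.
move=> d d0.
case: (pselect (exists s, 0 <= s <= 1 /\ Z (f s) /\ Rabs (s - sg) < d)) => // N.
have : sg <= sg - d; last lra.
apply: lub => s Es; have := ub s Es => hs.
case: (Rle_or_lt s (sg - d)) => // h; exfalso; apply: N; exists s.
by case: Es => ? ?; do !split => //; rewrite Rabs_left1; lra.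
Qed.

Lemma arc_path_complete f (inj : inj01 f) (Y : X -> Prop) :
  (forall y, Y y -> carrier (arc_path f) y) ->
  (forall sg, 0 <= sg <= 1 ->
     (forall d, 0 < d -> exists s, 0 <= s <= 1 /\ Y (f s) /\ Rabs (s - sg) < d) ->
     Y (f sg)) ->
  complete_in (arc_path f) Y.
Proof.
move=> HY clY; split => // Z ZY ne; split.
  have [sg [hsg [sup app]]] := arc_path_sup inj _ (fun z Zz => HY z (ZY z Zz)) ne.
  exists (f sg); split => //; apply: clY => // d d0.
  have [s [hs [Zs ds]]] := app d d0; exists s; do !split => //; exact: ZY.
pose g u := f (1 - u).
have HZ z : Z z -> carrier (arc_path g) z.
  by move=> /ZY /HY; rewrite /carrier -arc_path_inverse.
have [sg [hsg [sup app]]] := arc_path_sup (inj01_reverse inj) _ HZ ne.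
exists (g sg); split; first by move: sup; rewrite /g -arc_path_inverse.
apply: clY; first lra.
move=> d d0; have [s [hs [Zs ds]]] := app d d0; exists (1 - s); split; first lra.
split; first exact: ZY.
by rewrite (_ : 1 - s - (1 - sg) = - (s - sg)); [rewrite Rabs_Ropp|ring].
Qed.

Lemma arc_path_is_path f : inj01 f -> is_path (arc_path f).
Proof.
move=> inj; split; first exact: arc_path_linear.
by apply: arc_path_complete => // sg hsg _; apply: arc_path_intro; lra.
Qed.

End ArcPath.

Section TrivialPath.
Context {X : Type}.

Lemma trivial_complete (p : X) (Y : X -> Prop) :
  (forall y, Y y -> y = p) -> complete_in (trivial_path p) Y.
Proof.
move=> HY; split; first by move=> y /HY ->.
move=> Z ZY [z0 Zz0].
have ez z : Z z -> z = p by move=> /ZY /HY.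
have Yp : Y p by rewrite -(ez z0 Zz0); exact: ZY.
split; exists p; (split => //); split => //; split.
- by move=> z /ez ->.
- by move=> u [-> _].
- by move=> z /ez ->.
- by move=> u [-> _].
Qed.

Lemma trivial_is_path (p : X) : is_path (trivial_path p).
Proof.
split; last by apply: trivial_complete => y [].
split; [|split; [|split]].
- by move=> x y [-> ->].
- by move=> x y [-> ->].
- by move=> x y z [-> ->] [_ ->].
- by move=> x y [-> _] [-> _]; left.
Qed.

Lemma trivial_inverse (p : X) : inverse (trivial_path p) = trivial_path p.
Proof. by apply: rel_ext => a b; split => -[-> ->]. Qed.

Lemma trivial_segment (p x y : X) : trivial_path p x y ->
  segment (trivial_path p) x y = trivial_path p.
Proof.
move=> [-> ->]; apply: rel_ext => a b; split; last by move=> [-> ->].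
by move=> [[_ ea] [[_ eb] _]].
Qed.

Lemma segment_refl (P : Defs.rel X) x : linear_order P -> P x x ->
  segment P x x = trivial_path x.
Proof.
move=> [_ [anti [tr _]]] Pxx; apply: rel_ext => a b; split; last by move=> [-> ->].
move=> [xa [ab bx]]; split.
  by apply: anti => //; exact: tr ab bx.
by apply: anti => //; exact: tr xa ab.
Qed.

Lemma concat_trivial_l (p : X) (Q : Defs.rel X) :
  connects (trivial_path p) Q -> concat (trivial_path p) Q = Q.
Proof.
move=> [x [_ [[[ex _] _] [Qx minQ]]]]; subst x.
apply: rel_ext => a b; split; last by move=> h; right; left.
by move=> [[-> ->] // | [// | [[-> _] Qb]]]; apply: minQ.
Qed.

Lemma concat_trivial_r (q : X) (P : Defs.rel X) :
  connects P (trivial_path q) -> concat P (trivial_path q) = P.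
Proof.
move=> [x [_ [[Px maxP] [[ex _] _]]]]; subst x.
apply: rel_ext => a b; split; last by move=> h; left.
by move=> [// | [[-> ->] // | [Pa [-> _]]]]; apply: maxP.
Qed.

End TrivialPath.

Section Reparametrisation.
Context {X : topologicalType}.
Implicit Types f : R -> X.

Lemma cont01_reverse f : cont01 f -> cont01 (fun u => f (1 - u)).
Proof.
move=> /cont01P cf; apply/cont01P => x x0 x1 V /(cf (1 - x) ltac:(lra) ltac:(lra)).
move=> [d [d0 Hd]]; exists d; split => // y y0 y1 hy; apply: Hd; try lra.
by rewrite (_ : 1 - y - (1 - x) = - (y - x)); [rewrite Rabs_Ropp|ring].
Qed.

Lemma cont01_affine f s t : cont01 f -> 0 <= s -> s < t -> t <= 1 ->
  cont01 (fun u => f (s + u * (t - s))).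
Proof.
move=> /cont01P cf s0 st t1; apply/cont01P => x x0 x1 V.
move=> /(cf (s + x * (t - s)) ltac:(nra) ltac:(nra)) [d [d0 Hd]].
exists (d / (t - s)); split; first by apply: Rdiv_lt_0_compat; lra.
move=> y y0 y1 hy; apply: Hd; try nra.
have e : d / (t - s) * (t - s) = d by field; lra.
rewrite (_ : s + y * (t - s) - (s + x * (t - s)) = (y - x) * (t - s)); last ring.
rewrite Rabs_mult (Rabs_pos_eq (t - s)); last lra.
have := Rabs_pos (y - x); nra.
Qed.

Lemma inj01_affine f s t : inj01 f -> 0 <= s -> s < t -> t <= 1 ->
  inj01 (fun u => f (s + u * (t - s))).
Proof.
move=> inj s0 st t1 u v hu hv /inj e.
have := e ltac:(nra) ltac:(nra) => ?; apply: (Rmult_eq_reg_r (t - s)); lra.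
Qed.

Lemma segment_arc_path f s t : inj01 f -> 0 <= s -> s < t -> t <= 1 ->
  segment (arc_path f) (f s) (f t) = arc_path (fun u => f (s + u * (t - s))).
Proof.
move=> inj s0 st t1; apply: rel_ext => a b; split; last first.
  move=> [u [v [h0 [h1 [h2 [-> ->]]]]]].
  by split; last split; apply: arc_path_intro; nra.
move=> [xa [ab yb]].
have [[al [hal ea]] [be [hbe eb]]] :
    (exists s, 0 <= s <= 1 /\ a = f s) /\ (exists s, 0 <= s <= 1 /\ b = f s).
  by have [? ?] := proj1 (arc_path_linear inj) _ _ ab; split; apply/arc_path_carrier.
subst a b.
have hs : 0 <= s <= 1 by lra.
have ht : 0 <= t <= 1 by lra.
have h1 := arc_path_le inj hs hal xa.
have h2 := arc_path_le inj hal hbe ab.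
have h3 := arc_path_le inj hbe ht yb.
have ts : 0 < t - s by lra.
exists ((al - s) / (t - s)), ((be - s) / (t - s)).
split; first by apply: Rmult_le_pos; [lra | apply/Rlt_le/Rinv_0_lt_compat].
split; first by apply: Rmult_le_compat_r; [apply/Rlt_le/Rinv_0_lt_compat | lra].
split; first by apply: (Rmult_le_reg_r (t - s)) => //; rewrite /Rdiv Rmult_assoc Rinv_l; lra.
by split; congr f; field; lra.
Qed.

End Reparametrisation.

Definition arc_concat {X : Type} (f g : R -> X) (u : R) : X :=
  if Rle_dec u (1/2) then f (2 * u) else g (2 * u - 1).

Section Concatenation.
Context {X : topologicalType}.
Variables f g : R -> X.
Hypothesis fg : f 1 = g 0.

Lemma arc_concat_l u : u <= 1/2 -> arc_concat f g u = f (2 * u).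
Proof. by rewrite /arc_concat; case: Rle_dec. Qed.

Lemma arc_concat_r u : 1/2 <= u -> arc_concat f g u = g (2 * u - 1).
Proof.
rewrite /arc_concat; case: Rle_dec => // h h'.
have -> : 2 * u = 1 by lra.
by rewrite fg; congr g; ring.
Qed.

Lemma arc_concat_first s : s <= 1 -> arc_concat f g (s / 2) = f s.
Proof. by move=> h; rewrite arc_concat_l; [congr f; field | lra]. Qed.

Lemma arc_concat_second s : 0 <= s -> arc_concat f g ((s + 1) / 2) = g s.
Proof. by move=> h; rewrite arc_concat_r; [congr g; field | lra]. Qed.

Lemma arc_concat_near_left {x V} : cont01 f -> 0 <= x <= 1 ->
  nbhs (arc_concat f g x) V -> exists d, 0 < d /\
    forall y, 0 <= y <= 1/2 -> Rabs (y - x) < d -> V (arc_concat f g y).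
Proof.
move=> /cont01P cf hx; case: (Rle_or_lt x (1/2)) => hx2; last first.
  by move=> _; exists (x - 1/2); split; [lra | move=> y hy /Rabs_def2 [? ?]; lra].
rewrite arc_concat_l // => /(cf (2 * x) ltac:(lra) ltac:(lra)) [d [d0 Hd]].
exists (d / 2); split; first lra.
move=> y hy /Rabs_def2 [? ?]; rewrite arc_concat_l; last lra.
by apply: Hd; try lra; apply: Rabs_def1; lra.
Qed.

Lemma arc_concat_near_right {x V} : cont01 g -> 0 <= x <= 1 ->
  nbhs (arc_concat f g x) V -> exists d, 0 < d /\
    forall y, 1/2 <= y <= 1 -> Rabs (y - x) < d -> V (arc_concat f g y).
Proof.
move=> /cont01P cg hx; case: (Rle_or_lt (1/2) x) => hx2; last first.
  by move=> _; exists (1/2 - x); split; [lra | move=> y hy /Rabs_def2 [? ?]; lra].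
rewrite arc_concat_r // => /(cg (2 * x - 1) ltac:(lra) ltac:(lra)) [d [d0 Hd]].
exists (d / 2); split; first lra.
move=> y hy /Rabs_def2 [? ?]; rewrite arc_concat_r; last lra.
by apply: Hd; try lra; apply: Rabs_def1; lra.
Qed.

Lemma cont01_concat : cont01 f -> cont01 g -> cont01 (arc_concat f g).
Proof.
move=> cf cg; apply/cont01P => x x0 x1 V hV.
have [d1 [d10 H1]] := arc_concat_near_left cf (conj x0 x1) hV.
have [d2 [d20 H2]] := arc_concat_near_right cg (conj x0 x1) hV.
exists (Rmin d1 d2); split; first exact: Rmin_pos.
move=> y y0 y1 hy; have m1 := Rmin_l d1 d2; have m2 := Rmin_r d1 d2.
by case: (Rle_or_lt y (1/2)) => hy2; [apply: H1 | apply: H2]; lra.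
Qed.

Hypothesis meet_at_junction : forall s t, 0 <= s <= 1 -> 0 <= t <= 1 ->
  f s = g t -> s = 1 /\ t = 0.

Lemma inj01_concat : inj01 f -> inj01 g -> inj01 (arc_concat f g).
Proof.
move=> jf jg u v hu hv.
case: (Rle_or_lt u (1/2)) => hu2; case: (Rle_or_lt v (1/2)) => hv2.
- by rewrite !arc_concat_l // => /jf H; have := H ltac:(lra) ltac:(lra); lra.
- rewrite arc_concat_l // arc_concat_r; last lra.
  by move=> /meet_at_junction H; have := H ltac:(lra) ltac:(lra); lra.
- rewrite arc_concat_r; last lra; rewrite arc_concat_l // => /esym.
  by move=> /meet_at_junction H; have := H ltac:(lra) ltac:(lra); lra.
- by rewrite !arc_concat_r; try lra; move=> /jg H; have := H ltac:(lra) ltac:(lra); lra.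
Qed.

Lemma concat_arc_path :
  concat (arc_path f) (arc_path g) = arc_path (arc_concat f g).
Proof.
apply: rel_ext => a b; split.
  move=> [[s [t [h0 [h1 [h2 [-> ->]]]]]] | [[s [t [h0 [h1 [h2 [-> ->]]]]]] | []]].
  - rewrite -(arc_concat_first s); last lra.
    rewrite -(arc_concat_first t); last lra.
    by apply: arc_path_intro; lra.
  - rewrite -(arc_concat_second s); last lra.
    rewrite -(arc_concat_second t); last lra.
    by apply: arc_path_intro; lra.
  - move=> /arc_path_carrier [s [hs ->]] /arc_path_carrier [t [ht ->]].
    rewrite -(arc_concat_first s); last lra.
    rewrite -(arc_concat_second t); last lra.
    by apply: arc_path_intro; lra.
move=> [u [v [h0 [h1 [h2 [-> ->]]]]]].
case: (Rle_or_lt v (1/2)) => hv.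
  by left; rewrite !arc_concat_l; try lra; apply: arc_path_intro; lra.
case: (Rle_or_lt u (1/2)) => hu.
  right; right; rewrite arc_concat_l // arc_concat_r; last lra.
  by split; apply/arc_path_carrier; [exists (2 * u) | exists (2 * v - 1)]; split => //; lra.
by right; left; rewrite !arc_concat_r; try lra; apply: arc_path_intro; lra.
Qed.

End Concatenation.

Section ArcSpace.
Context {X : topologicalType}.
Implicit Types (f : R -> X) (P Q : Defs.rel X).

Lemma arc_space_cases P : arc_space P ->
  (exists f, cont01 f /\ inj01 f /\ P = arc_path f) \/ (exists p, P = trivial_path p).
Proof.
by move=> [[f [/arcP [c i] ->]] | [p ->]]; [left; exists f | right; exists p].
Qed.

Lemma arc_space_arc f : cont01 f -> inj01 f -> arc_space (arc_path f).
Proof. by move=> c i; left; exists f; split => //; apply/arcP. Qed.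

Lemma arc_space_trivial (p : X) : arc_space (trivial_path p).
Proof. by right; exists p. Qed.

Lemma arc_space_is_path P : arc_space P -> is_path P.
Proof.
move=> /arc_space_cases [[f [_ [jf ->]]] | [p ->]].
  exact: arc_path_is_path.
exact: trivial_is_path.
Qed.

Lemma arc_space_inverse P : arc_space P -> arc_space (inverse P).
Proof.
move=> /arc_space_cases [[f [cf [jf ->]]] | [p ->]].
  by rewrite arc_path_inverse; apply: arc_space_arc; [apply: cont01_reverse | apply: inj01_reverse].
by rewrite trivial_inverse; apply: arc_space_trivial.
Qed.

(* A segment is a rescaled arc, or trivial when its endpoints coincide. *)
Lemma arc_space_segment P x y : arc_space P -> P x y -> arc_space (segment P x y).
Proof.
move=> /arc_space_cases [[f [cf [jf ->]]] | [p ->]] Pxy; last first.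
  by rewrite trivial_segment //; apply: arc_space_trivial.
case: (Pxy) => [s [t [h0 [h1 [h2 [ex ey]]]]]]; subst x y.
case: (Rle_lt_or_eq_dec _ _ h1) => st.
  by rewrite segment_arc_path //; apply: arc_space_arc; [apply: cont01_affine | apply: inj01_affine].
subst t; rewrite segment_refl //; first exact: arc_space_trivial.
exact: arc_path_linear.
Qed.

(* If P_f connects to P_g, the arcs meet exactly at f 1 = g 0, so that
   their concatenation is again an arc. *)
Lemma arc_space_concat P Q : arc_space P -> arc_space Q -> connects P Q ->
  arc_space (concat P Q).
Proof.
move=> /arc_space_cases [[f [cf [jf ->]]] | [p ->]]; last first.
  by move=> SQ c; rewrite concat_trivial_l.
move=> /arc_space_cases [[g [cg [jg ->]]] | [q ->]]; last first.
  by move=> c; rewrite concat_trivial_r //; apply: arc_space_arc.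
move=> [x [common [[Px maxP] [Qx minQ]]]].
have xf : x = f 1 by apply: arc_path_max.
have xg : x = g 0 by apply: arc_path_min.
have fg : f 1 = g 0 by rewrite -xf -xg.
have junction s t : 0 <= s <= 1 -> 0 <= t <= 1 -> f s = g t -> s = 1 /\ t = 0.
  move=> hs ht e.
  have hz : f s = x.
    by apply/common; split; apply/arc_path_carrier; [exists s | exists t].
  split; first by apply: jf => //; [lra | rewrite hz xf].
  by apply: jg => //; [lra | rewrite -e hz xg].
rewrite concat_arc_path //; apply: arc_space_arc.
  exact: cont01_concat.
exact: inj01_concat.
Qed.

Lemma cont01_closed_limit {f} {C : set X} {sg} : cont01 f ->
  topology_structure.closed C -> 0 <= sg <= 1 ->
  (forall d, 0 < d -> exists s, 0 <= s <= 1 /\ C (f s) /\ Rabs (s - sg) < d) ->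
  C (f sg).
Proof.
move=> cf clC hsg app; apply: clC => B.
move=> /(proj1 (cont01P f) cf sg ltac:(lra) ltac:(lra)) [d [d0 Hd]].
have [s [hs [Cs ds]]] := app d d0.
by exists (f s); split => //; apply: Hd => //; lra.
Qed.

Hypothesis hX : hausdorff_space X.

Lemma arc_space_carrier_closed {Q} : arc_space Q ->
  topology_structure.closed (carrier Q).
Proof.
move=> /arc_space_cases [[g [cg [_ ->]]] | [q ->]].
  have -> : carrier (arc_path g) = g @` (`[0%R, 1%R] : set R).
    apply: funext => a; apply: propext; rewrite arc_path_carrier; split.
      by move=> [s [hs ->]]; exists s => //; apply/in_unit_interval.
    by move=> [s /in_unit_interval hs <-]; exists s.
  apply: compact_closed => //; apply: continuous_compact => //.
  exact: segment_compact.
have -> : carrier (trivial_path q) = [set q].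
  by apply: funext => a; apply: propext; split => [[]|->].
exact/accessible_closed_set1/hausdorff_accessible.
Qed.

(* The trace of a closed carrier on an arc path is complete in it. *)
Lemma arc_space_compatible : compatible (@arc_space X).
Proof.
move=> P Q /arc_space_cases [[f [cf [jf ->]]] | [p ->]] SQ; last first.
  by apply: trivial_complete => y [[-> _] _].
apply: arc_path_complete => //; first by move=> y [].
move=> sg hsg app; split; first by apply: arc_path_intro; lra.
apply: (cont01_closed_limit cf (arc_space_carrier_closed SQ)) => // d d0.
by have [s [hs [[_ Qs] ds]]] := app d d0; exists s.
Qed.

End ArcSpace.

Theorem mainTheorem4 (X : topologicalType) (hX : hausdorff_space X) :
  path_space (@arc_space X).
Proof.
split; last exact: arc_space_inverse.
split; first exact: arc_space_is_path.
split; first exact: arc_space_compatible hX.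
split; first exact: arc_space_segment.
exact: arc_space_concat.
Qed.
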